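(* If the languages recognized by two DFAs $\mathcal{A}_1$ and $\mathcal{A}_2$ over $A$ are not PT-separable, then there exists a factorization pattern $(\vec u,\vec B)$ such that both $\mathcal{A}_1$ and $\mathcal{A}_2$ admit a $(\vec u,\vec B)$-path.
   Context: Piecewise testable (PT) languages over $A$ are finite Boolean combinations of languages $A^*a_1A^*\cdots A^*a_nA^*$ ($a_i\in A$); $L_1,L_2$ are PT-separable if some PT language $L$ satisfies $L_1\subseteq L$, $L\cap L_2=\varnothing$. For states $p,q$ and $B\subseteq A$: $p\xrightarrow{\subseteq B}q$ denotes a path (possibly empty) with all labels in $B$; $p\xrightarrow{=B}q$ such a path in which every letter of $B$ occurs. A factorization pattern is $(\vec u,\vec B)$ with $\vec u=(u_0,\dots,u_p)\in(A^* )^{p+1}$, $\vec B=(B_1,\dots,B_p)$ nonempty subsets of $A$. A $(\vec u,\vec B)$-path is a path from an initial to a final state of the form $s_0\xrightarrow{u_0}p_1\xrightarrow{\subseteq B_1}q_1\xrightarrow{=B_1}q_1\xrightarrow{\subseteq B_1}r_1\xrightarrow{u_1}\cdots\xrightarrow{u_{p-1}}p_p\xrightarrow{\subseteq B_p}q_p\xrightarrow{=B_p}q_p\xrightarrow{\subseteq B_p}r_p\xrightarrow{u_p}f$. *)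

From mathcomp Require Import all_boot.
Set Implicit Arguments. Unset Strict Implicit. Unset Printing Implicit Defensive.

Record dfa (A : finType) := DFA {
  state : finType;
  init : state;
  delta : state -> A -> state;
  final : pred state }.

Section Defs.
Variable A : finType.

Definition run (D : dfa A) (p : state D) (w : seq A) : state D :=
  foldl (@delta A D) p w.

Definition lang (D : dfa A) : pred (seq A) :=
  fun w => final (run (init D) w).

(* Piecewise testable languages: finite Boolean combinations of
   A^* a_1 A^* ... A^* a_n A^*  =  { w | [:: a_1; ...; a_n] is a subword of w } *)
Inductive pt_expr :=
| PTatom of seq A
| PTtrue
| PTnot of pt_expr
| PTand of pt_expr & pt_expr
| PTor of pt_expr & pt_expr.

Fixpoint pt_sem (e : pt_expr) (w : seq A) : bool :=
  match e with
  | PTatom v => subseq v w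
  | PTtrue => true
  | PTnot e1 => ~~ pt_sem e1 w
  | PTand e1 e2 => pt_sem e1 w && pt_sem e2 w
  | PTor e1 e2 => pt_sem e1 w || pt_sem e2 w
  end.

Definition PT_language (L : pred (seq A)) : Prop :=
  exists e, forall w, L w = pt_sem e w.

Definition PT_separable (L1 L2 : pred (seq A)) : Prop :=
  exists L, PT_language L /\ (forall w, L1 w -> L w) /\ (forall w, L w -> ~~ L2 w).

Definition path_sub (D : dfa A) (B : {set A}) (p q : state D) : Prop :=
  exists w : seq A, all (fun a => a \in B) w /\ run p w = q.

Definition path_eq (D : dfa A) (B : {set A}) (p q : state D) : Prop :=
  exists w : seq A, all (fun a => a \in B) w /\ (forall b, b \in B -> b \in w)
                    /\ run p w = q.

(* from state s, a path of the form
   s -u_0-> p_1 -(⊆B_1)-> q_1 -(=B_1)-> q_1 -(⊆B_1)-> r_1 -u_1-> ... -u_p-> f, f final *)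
Fixpoint pattern_path_from (D : dfa A) (s : state D)
    (us : seq (seq A)) (Bs : seq {set A}) : Prop :=
  match us, Bs with
  | [:: u], [::] => final (run s u)
  | u :: us', B :: Bs' =>
      exists p q r : state D,
        run s u = p /\ path_sub B p q /\ path_eq B q q /\ path_sub B q r /\
        pattern_path_from r us' Bs'
  | _, _ => False
  end.

Definition factorization_pattern (us : seq (seq A)) (Bs : seq {set A}) : Prop :=
  size us = (size Bs).+1 /\ all (fun B : {set A} => B != set0) Bs.

Definition admits_pattern_path (D : dfa A) (us : seq (seq A)) (Bs : seq {set A}) : Prop :=
  pattern_path_from (init D) us Bs.

End Defs.

From Stdlib Require Import Classical ClassicalEpsilon.
From mathcomp Require Import all_boot zify.
Set Implicit Arguments. Unset Strict Implicit. Unset Printing Implicit Defensive.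

(* Call two words K-equivalent ([prof K s t]) when they have the same subwords
   of length at most K.  The proof has three independent parts.
   1. (PT definability) Every union of K-classes is a PT language, so if L1 and
      L2 are not PT-separable then, for every K, some w1 in L1 and w2 in L2 are
      K-equivalent.
   2. (Robustness) Fix m.  A skeleton is a sequence of letters and "zones" B; a
      word parses along it if it factorizes accordingly, each zone B being read
      by a factor over B with m B-arches (m disjoint consecutive factors each
      containing all of B).  For every m there is K such that each word s has a
      skeleton along which every word K-equivalent to s parses.  This is proved
      by induction on the size of the alphabet of s and, for a fixed alphabet,
      on the number of arches of s; the words K-equivalent to s are cut into
      pieces equivalent to pieces of s by maximal absorption of a prefix or a
      suffix ([prefix_absorb], [suffix_absorb]).
   3. (Soundness) If a word accepted by a DFA with at most m states parses along
      a skeleton, the DFA admits a path for the factorization pattern read off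
      the skeleton: by pigeonhole, m arches over B close a B-loop. *)

Section Subwords.
Variable A : finType.
Implicit Types (s t u v w : seq A) (x y e : A) (B C : {set A}).

Lemma subseq_split s1 s2 t : subseq (s1 ++ s2) t ->
  exists i, subseq s1 (take i t) /\ subseq s2 (drop i t).
Proof.
elim: t s1 => [|y t IH] s1.
  by rewrite subseq0 => /eqP; case: s1 => //= ->; exists 0.
case: s1 => [|x s1] H; first by exists 0; rewrite take0 drop0 sub0seq.
rewrite /= in H; case: eqP H => [<-|_] H.
  by have [i [H1 H2]] := IH _ H; exists i.+1 => /=; rewrite eqxx.
have [i [H1 H2]] := IH (x :: s1) H; exists i.+1 => /=; split=> //.
exact: subseq_trans H1 (subseq_cons _ _).
Qed.

Lemma subseq_join s1 s2 t i : subseq s1 (take i t) -> subseq s2 (drop i t) ->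
  subseq (s1 ++ s2) t.
Proof. by move=> H1 H2; rewrite -(cat_take_drop i t) cat_subseq. Qed.

Lemma subseq_take_le i j t : i <= j -> subseq (take i t) (take j t).
Proof. by move=> le; rewrite -(take_takel t le) take_subseq. Qed.

Lemma subseq_drop_le i j t : i <= j -> subseq (drop j t) (drop i t).
Proof. by move=> le; rewrite -(subnK le) -drop_drop drop_subseq. Qed.

Lemma subseq_rcons2 u e t y : subseq (rcons u e) (rcons t y) ->
  ~~ subseq (rcons u e) t -> y = e /\ subseq u t.
Proof.
rewrite -subseq_rev !rev_rcons /= -[subseq (rcons u e) t]subseq_rev rev_rcons.
case: eqP => [->|_] H1 H2; last by rewrite H1 in H2.
by split=> //; rewrite -subseq_rev.
Qed.

Lemma subseq_cons_inv v y t : subseq v (y :: t) -> ~~ subseq v t ->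
  exists v', v = y :: v' /\ subseq v' t.
Proof.
case: v => [|x v'] /=; first by rewrite sub0seq.
case: eqP => [->|_] H1 H2; last by rewrite H1 in H2.
by exists v'.
Qed.

Lemma subseq_last_take u e n s : subseq (rcons u e) (take n.+1 s) ->
  ~~ subseq (rcons u e) (take n s) ->
  n < size s /\ nth e s n = e /\ subseq u (take n s).
Proof.
case: (ltnP n (size s)) => ns.
  rewrite (take_nth e ns) => H1 H2.
  by have [-> ?] := subseq_rcons2 H1 H2.
by rewrite !take_oversize // ?(leq_trans ns) // => ->.
Qed.

Lemma split_index x s : x \in s ->
  s = take (index x s) s ++ x :: drop (index x s).+1 s /\ x \notin take (index x s) s.
Proof.
move=> xs; split; last by rewrite in_take // ltnn.
by rewrite -{1}(cat_take_drop (index x s) s) (drop_nth x) ?index_mem // nth_index.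
Qed.

Lemma subseq_sfx x v T q : x \notin T -> subseq v q = subseq (x :: v) (T ++ x :: q).
Proof.
elim: T => [|y T IH] /=; first by rewrite eqxx.
rewrite inE negb_or => /andP[nxy nT]; rewrite (negbTE nxy); exact: IH.
Qed.

Lemma subseq_pfx x v T p : x \notin T -> subseq v p = subseq (rcons v x) (p ++ x :: T).
Proof.
move=> nT; rewrite -[RHS]subseq_rev rev_rcons rev_cat rev_cons -cats1 -catA /=.
by rewrite -(subseq_rev v); apply: subseq_sfx; rewrite mem_rev.
Qed.

Lemma single_occurrence x s : x \in s ->
  (x \notin drop (index x s).+1 s) = ~~ subseq [:: x; x] s.
Proof.
move=> xs; have [E nT] := split_index xs.
by rewrite -sub1seq (subseq_sfx [:: x] _ nT) -E.
Qed.

Definition alph s : {set A} := [set x in s].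

Lemma alph_sub s t : subseq s t -> alph s \subset alph t.
Proof. by move=> st; apply/subsetP => x; rewrite !inE; exact: mem_subseq. Qed.

Lemma alph_drop_letter s C x :
  alph s \subset C -> x \in C -> x \notin s -> #|alph s| < #|C|.
Proof.
move=> sC xC xs; rewrite (cardsD1 x C) xC add1n ltnS; apply: subset_leq_card.
apply/subsetP => y ys; rewrite !inE (subsetP sC y ys) andbT.
by apply: contraNneq xs => <-; rewrite inE in ys.
Qed.

(* [x] is the letter of [s] whose first occurrence comes last: the prefix of
   [s] ending there is the shortest one containing all letters of [s]. *)
Definition last_first x s := x \in s /\ forall y, y \in s -> index y s <= index x s.

Lemma last_first_ex s : s != [::] -> exists x, last_first x s.
Proof.
case: s => // y s _; have [x xs xmax] := @arg_maxnP _ y (mem (y :: s))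
  (fun z => index z (y :: s)) (mem_head _ _).
by exists x.
Qed.

Lemma last_first_take x s : last_first x s -> alph s \subset alph (take (index x s).+1 s).
Proof.
by case=> xs xmax; apply/subsetP => y; rewrite !inE => ys; rewrite in_take ?ltnS ?xmax.
Qed.

Lemma last_first_once x s : x \in s -> ~~ subseq [:: x; x] (take (index x s).+1 s).
Proof.
move=> xs; apply/negP => /(leq_count_subseq (pred1 x)) /=.
rewrite (take_nth x) ?index_mem // nth_index // -cats1 count_cat /= eqxx.
by have [_ /count_memPn ->] := split_index xs.
Qed.

End Subwords.

Section Equivalence.
Variable A : finType.
Implicit Types (s t u v w : seq A) (x y e : A) (B C : {set A}).

Definition prof K s t := forall v, size v <= K -> subseq v s = subseq v t.

Lemma prof_refl K s : prof K s s. Proof. by []. Qed.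
Lemma prof_sym K s t : prof K s t -> prof K t s.
Proof. by move=> H v hv; rewrite H. Qed.
Lemma prof_trans K s t u : prof K s t -> prof K t u -> prof K s u.
Proof. by move=> H1 H2 v hv; rewrite H1 // H2. Qed.
Lemma prof_le K K' s t : K' <= K -> prof K s t -> prof K' s t.
Proof. by move=> le H v hv; apply: H; apply: leq_trans le. Qed.
Lemma prof_rev K s t : prof K s t -> prof K (rev s) (rev t).
Proof. by move=> H v hv; rewrite -[v]revK !subseq_rev; apply: H; rewrite size_rev. Qed.

Lemma prof_cons K x p p' : prof K p p' -> prof K (x :: p) (x :: p').
Proof.
move=> H [|y v] hv; first by rewrite !sub0seq.
by rewrite /=; case: eqP => _; apply: H => //; exact: ltnW.
Qed.

Lemma prof_mem K s t x : 0 < K -> prof K s t -> (x \in s) = (x \in t).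
Proof. by move=> K0 H; rewrite -!sub1seq; apply: H. Qed.

Lemma prof_alph K s t : 0 < K -> prof K s t -> alph s = alph t.
Proof. by move=> K0 H; apply/setP => x; rewrite !inE (prof_mem _ K0 H). Qed.

Lemma sfx_prof K x s s' : x \in s -> prof K.+1 s s' ->
  prof K (drop (index x s).+1 s) (drop (index x s').+1 s').
Proof.
move=> xs H; have xs' : x \in s' by rewrite -(prof_mem _ _ H).
have [E nT] := split_index xs; have [E' nT'] := split_index xs'.
by move=> v hv; rewrite (subseq_sfx v _ nT) (subseq_sfx v _ nT') -E -E'; apply: H.
Qed.

Lemma sfx_prof' K x s s' : x \in s -> prof K.+1 s s' ->
  prof K (drop (index x s) s) (drop (index x s') s').
Proof.
move=> xs H; have xs' : x \in s' by rewrite -(prof_mem _ _ H).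
rewrite [drop _ s](drop_nth x) ?index_mem // [drop _ s'](drop_nth x) ?index_mem //.
rewrite (nth_index x xs) (nth_index x xs').
by apply: prof_cons; apply: (sfx_prof xs H).
Qed.

Lemma pfx_prof K x s s' : x \in s -> prof K.+1 s s' ->
  prof K (take (size s - index x (rev s)) s) (take (size s' - index x (rev s')) s').
Proof.
move=> xs H; have := sfx_prof' (x := x) _ (prof_rev H); rewrite mem_rev => /(_ xs).
by rewrite !drop_rev => /prof_rev; rewrite !revK.
Qed.

Lemma pfx_single_prof K x s s' : x \in s -> x \notin drop (index x s).+1 s ->
  prof K.+1 s s' -> x \notin drop (index x s').+1 s' ->
  prof K (take (index x s) s) (take (index x s') s').
Proof.
move=> xs nT H nT'; have xs' : x \in s' by rewrite -(prof_mem _ _ H).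
have [E _] := split_index xs; have [E' _] := split_index xs'.
move=> v hv; rewrite (subseq_pfx v _ nT) (subseq_pfx v _ nT') -E -E'.
by apply: H; rewrite size_rcons.
Qed.

End Equivalence.

(* Given a target word [P], the maximal cut
   of [s] is the longest prefix of [s] all of whose short subwords are
   subwords of [P].  The subwords of the remaining suffix are described by a
   property of [s] alone ([after_cut]), which transfers to equivalent words. *)
Section Cut.
Variable A : finType.
Implicit Types (s t u v w : seq A) (x y e : A).
Variables (K : nat) (P : seq A).

Definition prefix_ok s j := forall w, size w <= K -> subseq w (take j s) -> subseq w P.

Definition max_cut s j := [/\ j <= size s, prefix_ok s j &
   forall j', j' <= size s -> prefix_ok s j' -> j' <= j].

Lemma max_cut_ex s : exists j, max_cut s j.
Proof.
have ok0 : prefix_ok s 0.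
  by move=> w _; rewrite take0 subseq0 => /eqP ->; exact: sub0seq.
suff /(_ _ (leqnn _)) [j [h1 h2 h3]] : forall n, n <= size s -> exists j,
    [/\ j <= n, prefix_ok s j & forall j', j' <= n -> prefix_ok s j' -> j' <= j].
  by exists j.
elim=> [_|n IH lt]; first by exists 0; split=> // j' /[swap] _; rewrite leqn0 => /eqP ->.
have [okn|okn] := classic (prefix_ok s n.+1); first by exists n.+1; split.
have [j [h1 h2 h3]] := IH (ltnW lt); exists j; split => //; first exact: leqW.
move=> j' hj' okj'; apply: h3 => //; rewrite leq_eqVlt in hj'.
by case/orP: hj' => [/eqP E|//]; rewrite E in okj'.
Qed.

Definition after_cut s v := exists u e, [/\ size u < K, ~~ subseq (rcons u e) P &
  (subseq (rcons u e ++ v) s \/ exists v', v = e :: v' /\ subseq (u ++ v) s)].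

Lemma after_cut_complete s j v : max_cut s j -> v != [::] ->
  subseq v (drop j s) -> after_cut s v.
Proof.
case=> js okj mj vn hv.
have jlt : j < size s.
  rewrite ltnNge; apply/negP => le; move: hv; rewrite drop_oversize //.
  by rewrite subseq0 (negbTE vn).
have nok : ~ prefix_ok s j.+1 by move=> ok; have := mj _ jlt ok; rewrite ltnn.
have [w [hw1 hw2 hw3]] : exists w,
    [/\ size w <= K, subseq w (take j.+1 s) & ~~ subseq w P].
  apply: NNPP => hn; apply: nok => w h1 h2; apply: NNPP => h3; apply: hn.
  by exists w; split=> //; exact/negP.
have nw : ~~ subseq w (take j s) by apply/negP => h; rewrite (okj _ hw1 h) in hw3.
move: hw1 hw2 hw3 nw; case/lastP: w => [|u e] hw1 hw2 hw3 nw.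
  by rewrite sub0seq in nw.
have [_ [he hu]] := subseq_last_take hw2 nw.
exists u, e; split => //; first by rewrite size_rcons in hw1.
rewrite (drop_nth e jlt) he in hv.
case hv2: (subseq v (drop j.+1 s)); first by left; apply: (subseq_join hw2 hv2).
have [v' [-> hv']] := subseq_cons_inv hv (negbT hv2).
right; exists v'; split => //.
by apply: (subseq_join hu); rewrite (drop_nth e jlt) he /= eqxx.
Qed.

Lemma after_cut_sound s j v : max_cut s j -> after_cut s v -> subseq v (drop j s).
Proof.
case=> js okj mj [u [e [hu hP H]]].
have past_j : forall i, subseq (rcons u e) (take i s) -> j < i.
  move=> i hi; rewrite ltnNge; apply/negP => le.
  have := okj _ _ (subseq_trans hi (subseq_take_le _ le)).
  by rewrite size_rcons (negbTE hP) => /(_ hu).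
case: H => [H|[v' [-> H]]].
  have [i [h1 h2]] := subseq_split H.
  exact: subseq_trans h2 (subseq_drop_le _ (ltnW (past_j _ h1))).
rewrite -cat_rcons in H; have [i [h1 h2]] := subseq_split H.
have ex : exists n, subseq (rcons u e) (take n s) by exists i.
case: (ex_minnP ex) => i0 hi0 mi0; have j0 := past_j _ hi0.
move: hi0 mi0 j0; case: i0 => [|i1] hi0 mi0 j0; first by rewrite ltn0 in j0.
have ni1 : ~~ subseq (rcons u e) (take i1 s).
  by apply/negP => h; have := mi0 _ h; rewrite ltnn.
have [i1s [he _]] := subseq_last_take hi0 ni1.
apply: subseq_trans (subseq_drop_le _ (j0 : j <= i1)).
rewrite (drop_nth e i1s) he /= eqxx.
by apply: subseq_trans h2 (subseq_drop_le _ _); exact: mi0.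
Qed.

Lemma after_cut_prof s s' v : prof (K + size v) s s' -> after_cut s v -> after_cut s' v.
Proof.
move=> H [u [e [h1 h2 h3]]]; exists u, e; split => //.
case: h3 => [h|[v' [ev h]]]; [left|right; exists v'; split=> //].
  by rewrite -H // size_cat size_rcons; lia.
by rewrite -H // size_cat ev /=; lia.
Qed.

Lemma cut_prof s s' j j' K2 : max_cut s j -> max_cut s' j' ->
  prof (K + K2) s s' -> prof K2 (drop j s) (drop j' s').
Proof.
move=> mj mj' H v hv; case: (eqVneq v [::]) => [->|vn]; first by rewrite !sub0seq.
have H' : prof (K + size v) s s' by apply: prof_le H; rewrite leq_add2l.
apply/idP/idP => h.
  exact/(after_cut_sound mj')/(after_cut_prof H')/(after_cut_complete mj).
exact/(after_cut_sound mj)/(after_cut_prof (prof_sym H'))/(after_cut_complete mj').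
Qed.

Lemma max_cut_prof s j n : max_cut s j -> n <= size s ->
  prof K (take n s) P -> prof K (take j s) P /\ n <= j.
Proof.
case=> js okj mj ns H.
have okn : prefix_ok s n by move=> w hw hs; rewrite -H.
have nj := mj _ ns okn; split => // w hw; apply/idP/idP => h; first exact: okj.
by rewrite -H // in h; apply: subseq_trans h (subseq_take_le _ nj).
Qed.

End Cut.

Section Absorb.
Variable A : finType.
Implicit Types (s t P Q : seq A).

Lemma prefix_absorb K K2 P s s' j : max_cut K P s j -> prof (K + K2) s s' ->
  (exists2 n, n <= size s' & prof K (take n s') P) ->
  exists j', prof K (take j' s') P /\ prof K2 (drop j s) (drop j' s').
Proof.
move=> mj hp [n ns hn]; have [j' mj'] := max_cut_ex K P s'.
exists j'; split; first by case: (max_cut_prof mj' ns hn).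
exact: cut_prof mj mj' hp.
Qed.

(* The mirror image: maximal absorption of a suffix equivalent to [Q];
   [k] is the position in [s] where the absorbed suffix starts. *)
Definition max_sfx_cut K Q s k := k <= size s /\ max_cut K (rev Q) (rev s) (size s - k).

Lemma max_sfx_cut_ex K Q s : exists k, max_sfx_cut K Q s k.
Proof.
have [i mi] := max_cut_ex K (rev Q) (rev s); have [hi _ _] := mi.
by rewrite size_rev in hi; exists (size s - i); rewrite /max_sfx_cut leq_subr subKn.
Qed.

Lemma max_sfx_cut_prof K Q s k n : max_sfx_cut K Q s k -> n <= size s ->
  prof K (drop n s) Q -> prof K (drop k s) Q /\ k <= n.
Proof.
move=> [ks mk] ns H.
have H' : prof K (take (size s - n) (rev s)) (rev Q).
  by rewrite take_rev subKn //; apply: prof_rev.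
have nrs : size s - n <= size (rev s) by rewrite size_rev leq_subr.
have [+ le] := max_cut_prof mk nrs H'.
rewrite take_rev subKn // => /prof_rev; rewrite !revK => hk; split=> //; lia.
Qed.

Lemma suffix_absorb K K2 Q s s' k : max_sfx_cut K Q s k -> prof (K + K2) s s' ->
  (exists2 n, n <= size s' & prof K (drop n s') Q) ->
  exists k', prof K (drop k' s') Q /\ prof K2 (take k s) (take k' s').
Proof.
move=> [ks mk] hp [n ns hn]; have [k' mk'] := max_sfx_cut_ex K Q s'.
exists k'; split; first by case: (max_sfx_cut_prof mk' ns hn).
have [ks' mk''] := mk'; have := cut_prof mk mk'' (prof_rev hp).
by rewrite !drop_rev !subKn // => /prof_rev; rewrite !revK.
Qed.

End Absorb.

Section Arches.
Variable A : finType.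
Implicit Types (s t : seq A) (B : {set A}).

Fixpoint arch (n : nat) B s : Prop :=
  if n is n'.+1 then exists i, B \subset alph (take i s) /\ arch n' B (drop i s)
  else True.

Lemma arch_blocks n B s : arch n B s -> exists ps : seq (seq A),
  [/\ size ps = n, all (fun p => B \subset alph p) ps,
      all (fun p => size p <= #|A|) ps & subseq (flatten ps) s].
Proof.
elim: n s => [|n IH] s /=; first by move=> _; exists [::]; rewrite sub0seq.
case=> i [hB /IH [ps [h1 h2 h3 h4]]].
exists (undup (take i s) :: ps); split => /=; first by rewrite h1.
- rewrite h2 andbT; apply: subset_trans hB _; apply/subsetP => x.
  by rewrite !inE mem_undup.
- rewrite h3 andbT; have /card_uniqP <- := undup_uniq (take i s); exact: max_card.
- by apply: subseq_join h4; exact: undup_subseq.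
Qed.

Lemma blocks_arch n B s (ps : seq (seq A)) : size ps = n ->
  all (fun p => B \subset alph p) ps -> subseq (flatten ps) s -> arch n B s.
Proof.
elim: ps n s => [|p ps IH] [|n] s //= [hn] /andP[hp hps] /subseq_split [i [h1 h2]].
exists i; split; last exact: IH.
by apply: subset_trans hp (alph_sub h1).
Qed.

Lemma arch_prof n B s s' : prof (n * #|A|) s s' -> arch n B s -> arch n B s'.
Proof.
move=> H /arch_blocks [ps [h1 h2 h3 h4]]; apply: (blocks_arch h1 h2).
rewrite -H // size_flatten -h1.
elim: ps h3 {h1 h2 h4} => [|p ps IH] //= /andP[hp hps].
by rewrite mulSn; apply: leq_add => //; exact: IH.
Qed.

Lemma arch_mono n n' B s : n' <= n -> arch n B s -> arch n' B s.
Proof.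
elim: n' n s => [|n' IH] [|n] s //= le [i [h1 h2]]; exists i; split=> //; exact: IH h2.
Qed.

Lemma arch1 B s : B \subset alph s -> arch 1 B s.
Proof. by move=> h; exists (size s); rewrite take_size. Qed.

Lemma arch_cat n B s1 s2 : B \subset alph s1 -> arch n B s2 -> arch n.+1 B (s1 ++ s2).
Proof. by move=> h1 h2; exists (size s1); rewrite take_size_cat // drop_size_cat. Qed.

End Arches.

Section Skeletons.
Variable A : finType.
Variable m : nat.
Implicit Types (s t u v w P Q R : seq A) (B C : {set A}).

Inductive item := Lt of A | Zn of {set A}.

Definition zone B z := [/\ B != set0, all (fun x => x \in B) z & arch m B z].

Fixpoint parse s (S : seq item) : Prop :=
  match S with
  | [::] => s = [::]
  | Lt a :: S' => exists s', s = a :: s' /\ parse s' S'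
  | Zn B :: S' => exists z s', [/\ s = z ++ s', zone B z & parse s' S']
  end.

Lemma parse_cat S1 S2 s1 s2 : parse s1 S1 -> parse s2 S2 -> parse (s1 ++ s2) (S1 ++ S2).
Proof.
elim: S1 s1 => [|[a|B] S1 IH] s1 /=; first by move=> ->.
  by case=> s' [-> h] h2; exists (s' ++ s2); split=> //; exact: IH.
case=> z [s' [-> hz h]] h2; exists z, (s' ++ s2); split=> //; first by rewrite catA.
exact: IH.
Qed.

Definition robust K s := exists S, forall s', prof K s s' -> parse s' S.

Lemma robust_le K K' s : K <= K' -> robust K s -> robust K' s.
Proof. by move=> le [S HS]; exists S => s' h; apply: HS; apply: prof_le h. Qed.

Lemma robust_glue2 K K' s P Q : robust K' P -> robust K' Q ->
  (forall s', prof K s s' -> exists X Y,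
     [/\ s' = X ++ Y, prof K' P X & prof K' Q Y]) ->
  robust K s.
Proof.
move=> [SP HP] [SQ HQ] H; exists (SP ++ SQ) => s' /H [X [Y [-> hX hY]]].
exact: parse_cat (HP _ hX) (HQ _ hY).
Qed.

Lemma robust_glue3 K K' s P Q R : robust K' P -> robust K' Q -> robust K' R ->
  (forall s', prof K s s' -> exists X Y Z,
     [/\ s' = X ++ Y ++ Z, prof K' P X, prof K' Q Y & prof K' R Z]) ->
  robust K s.
Proof.
move=> [SP HP] [SQ HQ] [SR HR] H; exists (SP ++ SQ ++ SR).
move=> s' /H [X [Y [Z [-> hX hY hZ]]]].
exact: parse_cat (HP _ hX) (parse_cat (HQ _ hY) (HR _ hZ)).
Qed.

Lemma robust_nil : robust 1 [::].
Proof.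
exists [::] => -[|x s'] // hp.
by have := hp [:: x] (leqnn 1); rewrite /= eqxx sub0seq.
Qed.

Lemma robust_letter a : robust 2 [:: a].
Proof.
exists [:: Lt a] => s' hp /=; exists [::]; split=> //.
have [x [r Es']] : exists x r, s' = x :: r.
  case: s' hp => [|x r] hp; last by exists x, r.
  by have := hp [:: a] isT; rewrite /= eqxx.
have xa : x = a.
  by have := hp [:: x] isT; rewrite !sub1seq Es' mem_head mem_seq1 => /eqP.
case: r Es' => [->|y r Es']; first by rewrite xa.
rewrite xa in Es'.
have := hp [:: a; y] isT; rewrite Es' -[a :: y :: r]/([:: a; y] ++ r) prefix_subseq.
by move=> /size_subseq.
Qed.

Lemma robust_zone s : s != [::] -> arch m (alph s) s -> robust (m * #|A|).+1 s.
Proof.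
move=> sn am; exists [:: Zn (alph s)] => s' hp.
have ea : alph s = alph s' := prof_alph (ltn0Sn _) hp.
exists s', [::]; split; [by rewrite cats0 | | by []].
split; last exact: arch_prof (prof_le (leqnSn _) hp) am.
  by case: s sn {am hp ea} => // x s _; apply/set0Pn; exists x; rewrite inE mem_head.
by apply/allP => x xs'; rewrite ea inE.
Qed.

End Skeletons.

Section LetterFacts.
Variable A : finType.
Implicit Types (s w P : seq A) (x : A) (C : {set A}).

Lemma alph_nonnil s n : #|alph s| = n.+1 -> s != [::].
Proof. by case: s => //; rewrite (_ : alph [::] = set0) ?cards0 //; apply/setP => x; rewrite !inE. Qed.

Lemma alph_rev s : alph (rev s) = alph s.
Proof. by apply/setP => x; rewrite !inE mem_rev. Qed.

Lemma notin_after_last x s : x \in s -> x \notin drop (size s - index x (rev s)) s.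
Proof. by move=> xs; rewrite -mem_rev -take_rev in_take ?mem_rev // ltnn. Qed.

Lemma last_first_rev x s : last_first x (rev s) ->
  alph s \subset alph (drop (size s - (index x (rev s)).+1) s).
Proof. by move/last_first_take; rewrite take_rev alph_rev alph_rev. Qed.

Lemma cut_before K x w j P : 0 < K -> x \in w -> x \notin P ->
  prof K (take j w) P -> j <= index x w.
Proof.
move=> K0 xw xP H; rewrite leqNgt; apply: contra xP => lt.
by rewrite -(prof_mem _ K0 H) in_take.
Qed.

Lemma arch2_of_cut C s i l : i <= l -> C \subset alph (take i s) ->
  C \subset alph (drop l s) -> arch 2 C s.
Proof.
move=> il hi hl; exists i; split=> //; apply: arch1.
exact: subset_trans hl (alph_sub (subseq_drop_le _ il)).
Qed.

(* Inside the first arch, the letter closing it occurs once, hence no word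
   there has two arches. *)
Lemma first_arch_no_two x s X : last_first x s ->
  subseq X (take (index x s).+1 s) -> ~ arch 2 (alph s) X.
Proof.
move=> [xs xmax] sX /arch_blocks [[|p1 [|p2 [|? ?]]] [//= _ /and3P[hp1 hp2 _] _ hX]].
have xC : x \in alph s by rewrite inE.
have xp1 : x \in p1 by move/subsetP: hp1 => /(_ x xC); rewrite inE.
have xp2 : x \in p2 by move/subsetP: hp2 => /(_ x xC); rewrite inE.
have xx : subseq [:: x; x] (flatten [:: p1; p2]).
  by rewrite /= cats0 -[[:: x; x]]/([:: x] ++ [:: x]) cat_subseq // sub1seq.
by move/negP: (last_first_once xs); apply; apply: subseq_trans xx (subseq_trans hX sX).
Qed.

Lemma arch_after_first x s r : last_first x s ->
  arch r (alph s) (drop (index x s).+1 s) -> arch r.+1 (alph s) s.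
Proof.
by move=> lx /(arch_cat (last_first_take lx)); rewrite cat_take_drop.
Qed.

End LetterFacts.

Section Step.
Variable A : finType.
Variables (m t K0 : nat).
Implicit Types (s w : seq A) (C : {set A}).
Hypothesis IH : forall s, #|alph s| <= t -> robust m K0 s.

Lemma robust_missing w C x : #|C| = t.+1 -> alph w \subset C -> x \in C -> x \notin w ->
  robust m K0 w.
Proof.
by move=> hC sC xC xw; apply: IH; rewrite -ltnS -hC; exact: (alph_drop_letter sC xC xw).
Qed.

Lemma robust_by_alph K w C : #|C| = t.+1 -> alph w \subset C ->
  (alph w = C -> robust m K w) -> robust m (maxn K0 K) w.
Proof.
move=> hC sC H; case: (leqP #|alph w| t) => h.
  exact: robust_le (leq_maxl _ _) (IH h).
have eC : alph w = C by apply/eqP; rewrite eqEcard sC hC.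
exact: robust_le (leq_maxr _ _) (H eC).
Qed.

(* A word in which some letter [a] of its alphabet occurs exactly once: the
   skeleton is (skeleton before a) a (skeleton after a). *)
Lemma robust_single s a : #|alph s| = t.+1 -> a \in s ->
  a \notin drop (index a s).+1 s -> robust m (maxn K0 2).+1 s.
Proof.
move=> hC as_ nT2; set K := maxn K0 2.
have [_ nT] := split_index as_; have aC : a \in alph s by rewrite inE.
have robT : robust m K (take (index a s) s).
  exact: robust_le (leq_maxl _ _) (robust_missing hC (alph_sub (take_subseq _ _)) aC nT).
have robT' : robust m K (drop (index a s).+1 s).
  exact: robust_le (leq_maxl _ _) (robust_missing hC (alph_sub (drop_subseq _ _)) aC nT2).
have robA : robust m K [:: a] := robust_le (leq_maxr _ _) (robust_letter m a).
apply: (robust_glue3 robT robA robT') => s' hp.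
have as' : a \in s' by rewrite -(prof_mem _ _ hp).
have nT2' : a \notin drop (index a s').+1 s'.
  have hK : size [:: a; a] <= K.+1 by apply: leqW (leq_maxr _ _).
  by rewrite (single_occurrence as') -(hp _ hK) -single_occurrence.
exists (take (index a s') s'), [:: a], (drop (index a s').+1 s'); split.
- by have [E _] := split_index as'.
- exact: pfx_single_prof as_ nT2 hp nT2'.
- exact: prof_refl.
- exact: sfx_prof as_ hp.
Qed.

(* Let [P] be the prefix of [s] ending at the last
   [b] and [Q] the suffix starting at the first [a], with [a] not in [P].
   A word equivalent to [s] is cut into a maximal prefix equivalent to [P], a
   maximal suffix equivalent to [Q], and a core equivalent to the core of [s];
   the latter lies before the first [a] of [s]. *)
Lemma robust_two_sided s a b : a \in s -> b \in s ->
  a \notin take (size s - index b (rev s)) s ->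
  (forall w, subseq w (take (index a s) s) -> robust m K0 w) ->
  robust m K0 (drop (index a s) s) ->
  robust m (K0.+1 + (K0.+1 + K0)) s.
Proof.
move=> as_ bs nP robpre robQ; set K1 := K0.+1; set ia := index a s.
set P := take (size s - index b (rev s)) s; set Q := drop ia s.
have K1pos : 0 < K1 by [].
have [j mj] := max_cut_ex K1 P s.
have [hjP _] := max_cut_prof mj (leq_subr _ _) (prof_refl P).
have jia : j <= ia := cut_before K1pos as_ nP hjP.
set tau := drop j s; have [k mk] := max_sfx_cut_ex K1 Q tau.
have Qtau : drop (ia - j) tau = Q by rewrite /tau drop_drop subnK.
have iatau : ia - j <= size tau by rewrite size_drop leq_sub2r // ltnW // index_mem.
have hQ : prof K1 (drop (ia - j) tau) Q by rewrite Qtau; exact: prof_refl.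
have [_ kia] := max_sfx_cut_prof mk iatau hQ.
have robP : robust m K0 P.
  by apply/robpre/subseq_take_le/(cut_before (ltn0Sn 0) as_ nP); exact: prof_refl.
have robcore : robust m K0 (take k tau).
  apply/robpre/(subseq_trans (subseq_take_le _ kia)).
  by rewrite /tau take_drop subnK // drop_subseq.
apply: (robust_glue3 robP robcore robQ) => s' hp.
have hp1 : prof K1.+1 s s' by apply: prof_le hp; rewrite -addn1 leq_add2l addSn.
have as' : a \in s' by rewrite -(prof_mem _ _ hp).
have hpP := pfx_prof bs hp1; have hpQ := sfx_prof' as_ hp1.
have [j' [hj'P htau]] := prefix_absorb mj hp
  (ex_intro2 _ _ (size s' - index b (rev s')) (leq_subr _ _) (prof_sym hpP)).
have j'ia' : j' <= index a s' := cut_before K1pos as' nP hj'P.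
have Qtau' : prof K1 (drop (index a s' - j') (drop j' s')) Q.
  by rewrite drop_drop subnK //; exact: prof_sym hpQ.
have iatau' : index a s' - j' <= size (drop j' s').
  by rewrite size_drop leq_sub2r // ltnW // index_mem.
have [k' [hk'Q hcore]] := suffix_absorb mk htau (ex_intro2 _ _ (index a s' - j') iatau' Qtau').
exists (take j' s'), (take k' (drop j' s')), (drop k' (drop j' s')); split.
- by rewrite !cat_take_drop.
- exact: prof_le (leqnSn _) (prof_sym hj'P).
- exact: hcore.
- exact: prof_le (leqnSn _) (prof_sym hk'Q).
Qed.

(* With [a] the letter whose
   first occurrence comes last and [b] the letter whose last occurrence comes
   first, the absence of two arches means that the last [b] is not after the
   first [a]; either it is strictly before (two-sided absorption) or the two
   coincide, so that [a = b] occurs once. *)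
Lemma robust_one_arch : exists K, forall s, #|alph s| = t.+1 ->
  ~ arch 2 (alph s) s -> robust m K s.
Proof.
exists (maxn (maxn K0 2).+1 (K0.+1 + (K0.+1 + K0))) => s hC n2.
have sn : s != [::] := alph_nonnil hC.
have [a fa] := last_first_ex sn.
have [b lb] : exists b, last_first b (rev s).
  by apply: last_first_ex; rewrite -size_eq0 size_rev size_eq0.
have [as_ _] := fa; have bs : b \in s by rewrite -mem_rev; case: lb.
set ia := index a s; set jb := index b (rev s).
have jbs : jb < size s by rewrite -(size_rev s) index_mem mem_rev.
set ib := size s - jb.+1.
have Eib : size s - jb = ib.+1 by rewrite /ib subnSK.
have ibia : ib <= ia.
  rewrite leqNgt; apply/negP => lt; apply: n2.
  exact: arch2_of_cut lt (last_first_take fa) (last_first_rev lb).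
have [_ nT] := split_index as_.
case: (ltnP ib ia) => [lt|ge].
- apply: robust_le (leq_maxr _ _) _.
  have aC : a \in alph s by rewrite inE.
  apply: (robust_two_sided as_ bs).
  + by apply: contra nT; rewrite Eib; apply/mem_subseq/subseq_take_le.
  + move=> w sw; have sws := subseq_trans sw (take_subseq _ _).
    by apply: (robust_missing hC (alph_sub sws) aC); apply: contra nT; apply: mem_subseq.
  + have bC : b \in alph s by rewrite inE.
    apply: (robust_missing hC (alph_sub (drop_subseq _ _)) bC).
    apply: contra (notin_after_last bs); rewrite Eib.
    exact/mem_subseq/subseq_drop_le.
- apply: robust_le (leq_maxl _ _) _.
  have E : ib = ia by apply/eqP; rewrite eqn_leq ibia ge.
  have ab : a = b.
    have ibs : ib < size s by rewrite E index_mem.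
    have := nth_index a as_; rewrite -/ia -E (set_nth_default b) //.
    by rewrite /ib -nth_rev // nth_index ?mem_rev.
  apply: (robust_single hC as_); rewrite -/ia -E -Eib ab.
  exact: notin_after_last bs.
Qed.

(* Words over t.+1 letters without r.+1 arches (r >= 2): cut after the first
   arch, absorb maximally a suffix equivalent to the rest; both pieces have
   fewer letters or fewer arches. *)
Lemma robust_more_arches r Kr : 2 <= r ->
  (forall s, #|alph s| = t.+1 -> ~ arch r (alph s) s -> robust m Kr s) ->
  exists K, forall s, #|alph s| = t.+1 -> ~ arch r.+1 (alph s) s -> robust m K s.
Proof.
move=> r2 Hr; set K2 := maxn K0 Kr; set K1 := (maxn K2 (r * #|A|)).+1.
have K21 : K2 <= K1 by rewrite leqW // leq_maxl.
exists (K1.+1 + K2) => s hC nr.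
have sn : s != [::] := alph_nonnil hC.
have [a fa] := last_first_ex sn; have [as_ _] := fa.
set ia := index a s; set seg := drop ia.+1 s.
have ias : ia.+1 <= size s by rewrite index_mem.
have [k mk] := max_sfx_cut_ex K1 seg s.
have [hY hk] := max_sfx_cut_prof mk ias (prof_refl seg).
have robX : robust m K2 (take k s).
  apply: (robust_by_alph hC (alph_sub (take_subseq _ _))) => eX.
  apply: Hr; first by rewrite eX.
  move=> /(arch_mono r2); rewrite eX; apply: first_arch_no_two fa _.
  exact: subseq_take_le.
have robY : robust m K2 (drop k s).
  apply: (robust_by_alph hC); first by rewrite (prof_alph _ hY) // alph_sub // drop_subseq.
  move=> eY; apply: Hr; first by rewrite eY.
  rewrite eY => /(arch_prof (prof_le (leqW (leq_maxr _ _)) hY)) /(arch_after_first fa).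
  exact: nr.
apply: (robust_glue2 robX robY) => s' hp.
have as' : a \in s' by rewrite -(prof_mem _ _ hp).
have hseg : prof K1 seg (drop (index a s').+1 s').
  by apply: sfx_prof as_ (prof_le _ hp); rewrite leq_addr.
have ias' : (index a s').+1 <= size s' by rewrite index_mem.
have [k' [hk'Y hX]] := suffix_absorb mk (prof_le (leq_add (leqnSn _) (leqnn _)) hp)
  (ex_intro2 _ _ (index a s').+1 ias' (prof_sym hseg)).
exists (take k' s'), (drop k' s'); split.
- by rewrite cat_take_drop.
- exact: hX.
- exact: prof_le K21 (prof_trans hY (prof_sym hk'Y)).
Qed.

Lemma robust_few_arches r : exists K, forall s, #|alph s| = t.+1 ->
  ~ arch r.+2 (alph s) s -> robust m K s.
Proof.
elim: r => [|r [Kr Hr]]; first exact: robust_one_arch.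
exact: robust_more_arches Hr.
Qed.

Lemma robust_step : exists K, forall s, #|alph s| <= t.+1 -> robust m K s.
Proof.
have [Km HKm] := robust_few_arches m.
exists (maxn (maxn K0 Km) (m * #|A|).+1) => s hs.
case: (leqP #|alph s| t) => h.
  by apply: robust_le (IH h); rewrite !leq_max leqnn.
have hC : #|alph s| = t.+1 by apply/eqP; rewrite eqn_leq hs h.
have sn : s != [::] := alph_nonnil hC.
case: (classic (arch m (alph s) s)) => am.
  exact: robust_le (leq_maxr _ _) (robust_zone sn am).
apply: robust_le (HKm s hC _); first by rewrite !leq_max leqnn orbT.
by move=> /(arch_mono (leqW (leqnSn m))).
Qed.

End Step.

Lemma robust_all (A : finType) m n : exists K, forall s : seq A, #|alph s| <= n -> robust m K s.
Proof.
elim: n => [|t [K0 H0]]; last exact: robust_step H0.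
exists 1 => s; rewrite leqn0 => /eqP /cards0_eq E.
case: s E => [_|x s E]; first exact: robust_nil.
by have := in_set0 x; rewrite -E inE mem_head.
Qed.

Section Soundness.
Variable A : finType.
Variable D : dfa A.
Implicit Types (w z : seq A) (B : {set A}) (p q : state D).

(* The factorization pattern read off a skeleton: the letters between two
   zones form the words [u_i], the zones the alphabets [B_i]. *)
Fixpoint pattern_of (S : seq (item A)) : seq (seq A) * seq {set A} :=
  match S with
  | [::] => ([:: [::]], [::])
  | Lt a :: S' => let: (us, Bs) := pattern_of S' in
       (if us is u :: us' then (a :: u) :: us' else [:: [:: a]], Bs)
  | Zn B :: S' => let: (us, Bs) := pattern_of S' in ([::] :: us, B :: Bs)
  end.

Lemma pattern_of_size S : size (pattern_of S).1 = (size (pattern_of S).2).+1.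
Proof.
elim: S => [|[a|B] S IH] //=; case: (pattern_of S) IH => [[|u us] Bs] //=.
by move=> [->].
Qed.

Lemma pattern_of_nonempty m S w : parse m w S ->
  all (fun B : {set A} => B != set0) (pattern_of S).2.
Proof.
elim: S w => [|[a|B] S IH] w //=.
  by case=> w' [_ /IH]; case: (pattern_of S).
case=> z [w' [_ [hB _ _] /IH]]; case: (pattern_of S) => us Bs /= ->.
by rewrite hB.
Qed.

Lemma run_cat p w1 w2 : run p (w1 ++ w2) = run (run p w1) w2.
Proof. by rewrite /run foldl_cat. Qed.

Lemma path_sub_run B p q w : path_sub B p q -> all (fun x => x \in B) w ->
  path_sub B p (run q w).
Proof.
case=> v [hv <-] hw; exists (v ++ w); split; first by rewrite all_cat hv.
by rewrite run_cat.
Qed.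

Lemma path_eq_run B p q w : path_eq B p q -> all (fun x => x \in B) w ->
  path_eq B p (run q w).
Proof.
case=> v [hv [hB <-]] hw; exists (v ++ w); split; first by rewrite all_cat hv.
by split; [move=> b bB; rewrite mem_cat hB | rewrite run_cat].
Qed.

(* Pigeonhole along the arches of a word over [B].  The list [V] holds the
   distinct states reached at the ends of the arches read so far; each is
   reachable from [s0] and leads to the current state [p] through all of
   [B].  Either [p] already occurs in [V], closing a B-loop, or [V] grows,
   which cannot happen more than [#|state D|] times. *)
Lemma arch_loop B s0 n z p (V : seq (state D)) :
  uniq V -> #|state D| <= size V + n ->
  (forall q, q \in V -> path_sub B s0 q /\ path_eq B q p) ->
  path_sub B s0 p -> arch n B z -> all (fun x => x \in B) z ->
  exists q, [/\ path_sub B s0 q, path_eq B q q & path_sub B q (run p z)].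
Proof.
elim: n z p V => [|n IH] z p V uV hc hV hp ha hz;
  (have [pV|pV] := boolP (p \in V);
   first by exists p; split; [case: (hV _ pV) | case: (hV _ pV) | exists z]).
  have /card_uniqP e : uniq (p :: V) by rewrite /= pV.
  by have := leq_trans (max_card (mem (p :: V))) hc; rewrite e /= addn0 ltnn.
case: ha => i [hi ha]; rewrite -(cat_take_drop i z) all_cat in hz.
case/andP: hz => hzi hzd; rewrite -(cat_take_drop i z) run_cat.
have hloop : path_eq B p (run p (take i z)).
  exists (take i z); split=> //; split=> // b /(subsetP hi); by rewrite inE.
apply: (IH _ _ (p :: V)) => //; first by rewrite /= pV.
- by rewrite /= addSnnS.
- move=> q; rewrite inE => /orP[/eqP ->|qV]; first by [].
  by have [h1 h2] := hV _ qV; split=> //; apply: path_eq_run.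
- exact: path_sub_run.
Qed.

Lemma zone_loop m B z p : #|state D| <= m -> zone m B z ->
  exists q, [/\ path_sub B p q, path_eq B q q & path_sub B q (run p z)].
Proof.
move=> hm [_ hz ha]; apply: (@arch_loop B p m z p [::]) => //.
by exists [::].
Qed.

Lemma parse_sound m S w p : #|state D| <= m -> parse m w S -> final (run p w) ->
  pattern_path_from p (pattern_of S).1 (pattern_of S).2.
Proof.
move=> hm; elim: S w p => [|[a|B] S IH] w p /=; first by move=> ->.
  case=> w' [-> hw] hf; have := IH w' (delta p a) hw hf.
  by have := pattern_of_size S; case: (pattern_of S) => [[|u us] Bs].
case=> z [w' [-> hz hw]]; rewrite run_cat => hf.
have [q [q1 q2 q3]] := zone_loop p hm hz; have := IH w' (run p z) hw hf.
have := pattern_of_size S; case: (pattern_of S) => [[|u us] Bs] //= _ h.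
by exists p, q, (run p z).
Qed.

End Soundness.

Section PT.
Variable A : finType.

Fixpoint words (n : nat) : seq (seq A) :=
  if n is n'.+1 then [::] :: [seq x :: w | x <- enum A, w <- words n'] else [:: [::]].

Lemma words_mem n v : size v <= n -> v \in words n.
Proof.
elim: n v => [|n IH] [|x v] //= h; rewrite ?inE ?eqxx //=.
by apply: (allpairs_f (fun x0 w => x0 :: w)); [rewrite mem_enum | exact: IH].
Qed.

Lemma pt_build (V : seq (seq A)) (g : seq bool -> bool) :
  exists e, forall w, pt_sem e w = g (map (fun v => subseq v w) V).
Proof.
elim: V g => [|v V IH] g.
  exists (if g [::] then @PTtrue A else PTnot (@PTtrue A)) => w /=.
  by case: (g [::]).
have [e1 h1] := IH (fun b => g (true :: b)); have [e0 h0] := IH (fun b => g (false :: b)).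
exists (PTor (PTand (PTatom v) e1) (PTand (PTnot (PTatom v)) e0)) => w /=.
by rewrite h1 h0; case: subseq => /=; rewrite ?orbF.
Qed.

Lemma prof_closed_PT K (Q : seq A -> Prop) :
  (forall w w', prof K w w' -> Q w -> Q w') -> exists e, forall w, Q w <-> pt_sem e w.
Proof.
move=> hQ; pose vec w := map (fun v => subseq v w) (words K).
pose g b := if excluded_middle_informative (exists w, vec w = b /\ Q w) then true else false.
have [e he] := pt_build (words K) g; exists e => w; rewrite he /g.
case: excluded_middle_informative => [[w0 [h1 h2]]|n].
  split=> // _; apply: hQ h2 => v hv.
  by move/eq_in_map: h1 => /(_ v (words_mem hv)).
by split=> // hw; exfalso; apply: n; exists w.
Qed.

(* If L1 and L2 are not PT-separable, each level of equivalence relates some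
   word of L1 to some word of L2: otherwise the K-closure of L1 separates. *)
Lemma nonsep_prof (D1 D2 : dfa A) K : ~ PT_separable (lang D1) (lang D2) ->
  exists w1 w2, [/\ lang D1 w1, lang D2 w2 & prof K w1 w2].
Proof.
move=> ns; apply: NNPP => hn; apply: ns.
have [e he] : exists e, forall w, (exists2 w1, lang D1 w1 & prof K w1 w) <-> pt_sem e w.
  apply: (prof_closed_PT (K := K)) => w w' h [w1 h1 h2].
  by exists w1 => //; exact: prof_trans h2 h.
exists (pt_sem e); split; first by exists e.
split; first by move=> w hw; apply/he; exists w; last exact: prof_refl.
by move=> w /he [w1 h1 h2]; apply/negP => h2w; apply: hn; exists w1, w.
Qed.

End PT.

Theorem lemma5 (A : finType) (D1 D2 : dfa A) :
  ~ PT_separable (lang D1) (lang D2) ->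
  exists (us : seq (seq A)) (Bs : seq {set A}),
    factorization_pattern us Bs /\
    admits_pattern_path D1 us Bs /\ admits_pattern_path D2 us Bs.
Proof.
move=> ns; pose m := maxn #|state D1| #|state D2|.
have [K HK] := robust_all A m #|A|.
have [w1 [w2 [h1 h2 hp]]] := nonsep_prof K ns.
have [S HS] := HK w1 (max_card _).
have p1 := HS w1 (prof_refl _); have p2 := HS w2 hp.
exists (pattern_of S).1, (pattern_of S).2; split; [split|split].
- exact: pattern_of_size.
- exact: pattern_of_nonempty p1.
- exact: parse_sound (leq_maxl _ _) p1 h1.
- exact: parse_sound (leq_maxr _ _) p2 h2.
Qed.
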